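(* For every instance of PKP, every optimal solution set $S^*$ satisfies $\sum_{j\in S^*}\log(|p_j|)\ge \log(p_{\max})$, where $p_{\max}=\max_{j\in N}|p_j|$ and $\log$ is the base-2 logarithm.
   Context: The Product Knapsack Problem (PKP): items $j\in N=\{1,\dots,n\}$ with integer weights $w_j$ and integer profits $p_j$, and a positive integer capacity $C$; find $S\subseteq N$ with $\sum_{j\in S}w_j\le C$ maximizing $\prod_{j\in S}p_j$ (the empty set has value $0$). Instances are assumed to satisfy: (a) $w_j\le C$ for all $j$; (b) $p_j\ne 0$ for all $j$; (c) for each $j$ with $p_j<0$ there is $j'\ne j$ with $p_{j'}<0$ and $w_j+w_{j'}\le C$; (d) $w_j\ge 0$ for all $j$; (e) $p_j<0$ whenever $w_j=0$. *)

From mathcomp Require Import all_boot all_order all_algebra.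
From mathcomp Require Import all_classical all_reals all_analysis.
Set Implicit Arguments. Unset Strict Implicit. Unset Printing Implicit Defensive.
Import Order.TTheory GRing.Theory Num.Theory.
Local Open Scope ring_scope.

Definition log2 {R : realType} (x : R) : R := ln x / ln 2.

Section PKP.
Variable n : nat.
Variables (w p : 'I_n -> int) (C : int).

Definition pkp_weight (S : {set 'I_n}) : int := \sum_(j in S) w j.

Definition pkp_feasible (S : {set 'I_n}) : bool := pkp_weight S <= C.

Definition pkp_value (S : {set 'I_n}) : int :=
  if S == finset.set0 then 0 else \prod_(j in S) p j.

Definition pkp_optimal (S : {set 'I_n}) : Prop :=
  pkp_feasible S /\ forall T : {set 'I_n}, pkp_feasible T -> pkp_value T <= pkp_value S.

(* the standing instance assumptions (a)-(e), together with 0 < C *)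
Definition pkp_instance : Prop :=
  0 < C /\
  [/\ (forall j, w j <= C),
      (forall j, p j != 0),
      (forall j, p j < 0 -> exists2 j', j' != j & (p j' < 0) && (w j + w j' <= C)),
      (forall j, 0 <= w j)
    & (forall j, w j = 0 -> p j < 0)].

Definition pkp_pmax : nat := \max_(j < n) `|p j|%N.
End PKP.

From mathcomp Require Import all_boot all_order all_algebra.
From mathcomp Require Import all_classical all_reals all_analysis.
Set Implicit Arguments. Unset Strict Implicit. Unset Printing Implicit Defensive.
Import Order.TTheory GRing.Theory Num.Theory.
Local Open Scope ring_scope.

(* If p_j > 0 then {j} is feasible with value p_j; if p_j < 0, assumption (c)
   provides another negative item j' with {j, j'} feasible, of value
   p_j p_j' >= |p_j|.  Hence an optimal set S has value at least p_max, which
   in turn is at most the product of the |p_j| over S; taking logarithms turns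
   that product into the sum. *)

Section Log2.
Variable R : realType.

Lemma log2_1 : log2 (1 : R) = 0.
Proof. by rewrite /log2 ln1 mul0r. Qed.

Lemma log2M : {in Num.pos &, {morph (@log2 R) : x y / x * y >-> x + y}}.
Proof. by move=> x y x0 y0; rewrite /log2 lnM // mulrDl. Qed.

Lemma ler_log2 : {in Num.pos &, {mono (@log2 R) : x y / x <= y}}.
Proof.
move=> x y x0 y0; rewrite /log2 ler_pM2r ?ler_ln //.
by rewrite invr_gt0 ln_gt0 // ltr1n.
Qed.

Lemma log2_prod (I : Type) (r : seq I) (P : pred I) (F : I -> R) :
    (forall i, P i -> 0 < F i) ->
  log2 (\prod_(i <- r | P i) F i) = \sum_(i <- r | P i) log2 (F i).
Proof.
move=> F_gt0; elim: r => [|i r IHr]; first by rewrite !big_nil log2_1.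
rewrite !big_cons; case: ifP => // Pi.
by rewrite log2M ?IHr // posrE ?F_gt0 // prodr_gt0.
Qed.

End Log2.

Section PKP.
Variables (n : nat) (w p : 'I_n -> int) (C : int).

Lemma pkp_feasible_set1 j : w j <= C -> pkp_feasible w C [set j].
Proof. by rewrite /pkp_feasible /pkp_weight big_set1. Qed.

Lemma pkp_feasible_set2 j j' :
  j != j' -> w j + w j' <= C -> pkp_feasible w C [set j; j'].
Proof.
by move=> jj'; rewrite /pkp_feasible /pkp_weight big_setU1 ?inE // big_set1.
Qed.

Lemma pkp_value_set1 j : pkp_value p [set j] = p j.
Proof.
by rewrite /pkp_value big_set1; case: eqP => // /setP/(_ j); rewrite !inE eqxx.
Qed.

Lemma pkp_value_set2 j j' : j != j' -> pkp_value p [set j; j'] = p j * p j'.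
Proof.
move=> jj'; rewrite /pkp_value big_setU1 ?inE // big_set1.
by case: eqP => // /setP/(_ j); rewrite !inE eqxx.
Qed.

Lemma pkp_value_le_prod_abs S : pkp_value p S <= (\prod_(j in S) `|p j|%N)%:Z.
Proof.
rewrite /pkp_value; case: ifP => // _.
rewrite -natz natr_prod [leRHS](eq_bigr (fun j => `|p j|)) => [|j _].
  by rewrite -normr_prod ler_norm.
by rewrite natr_absz intz.
Qed.

Hypothesis instance : pkp_instance w p C.

Lemma pkp_abs_profit_le_feasible_value j :
  exists2 T, pkp_feasible w C T & (`|p j|%N)%:Z <= pkp_value p T.
Proof.
have [_ [w_le_C p_neq0 neg_partner _ _]] := instance.
have [pj_gt0 | pj_lt0] := ltrP 0 (p j).
  exists [set j]; first exact: pkp_feasible_set1.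
  by rewrite pkp_value_set1 abszE gtr0_norm.
have {}pj_lt0 : p j < 0 by rewrite lt_neqAle p_neq0.
have [j' j'j /andP [pj'_lt0 wjj']] := neg_partner j pj_lt0.
have jj' : j != j' by rewrite eq_sym.
exists [set j; j']; first exact: pkp_feasible_set2.
by rewrite pkp_value_set2 // abszE ltr0_norm // -mulrN1 ler_nM2l.
Qed.

Lemma pkp_pmax_le_prod_abs S :
  pkp_optimal w p C S -> (pkp_pmax p <= \prod_(j in S) `|p j|)%N.
Proof.
case=> _ S_max; apply/bigmax_leqP => j _.
have [T T_feas pj_le] := pkp_abs_profit_le_feasible_value j.
rewrite -lez_nat; apply: le_trans pj_le _.
exact: le_trans (S_max T T_feas) (pkp_value_le_prod_abs S).
Qed.

Lemma pkp_pmax_gt0 : (0 < n)%N -> (0 < pkp_pmax p)%N.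
Proof.
move=> n_gt0; have [_ [_ p_neq0 _ _ _]] := instance.
apply: leq_trans (leq_bigmax (Ordinal n_gt0)).
by rewrite absz_gt0 p_neq0.
Qed.

End PKP.

Theorem lemma3 (R : realType) (n : nat) (w p : 'I_n -> int) (C : int)
    (Hn : (0 < n)%N) (Hinst : pkp_instance w p C)
    (S : {set 'I_n}) (Hopt : pkp_optimal w p C S) :
  \sum_(j in S) log2 ((`|p j|%N)%:R : R) >= log2 ((pkp_pmax p)%:R : R).
Proof.
have pmax_le := pkp_pmax_le_prod_abs Hinst Hopt.
have pmax_gt0 := pkp_pmax_gt0 Hinst Hn.
have p_neq0 : forall j, p j != 0 by case: Hinst => _ [].
rewrite -log2_prod => [|j _]; last by rewrite ltr0n absz_gt0.
rewrite -natr_prod ler_log2 ?posrE ?ltr0n ?ler_nat //.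
exact: leq_trans pmax_le.
Qed.
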